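(* Let $K$ be a polygonal knot with vertices $v_1,\dots,v_n$ and edges $e_1,\dots,e_n$ (indices mod $n$). Then for each $i$, $$MD(e_i,v_{i+2}) \geq \min\{2\,MinRad(K),\,MinEdge(K)\},$$ and in particular, when $angle(v_{i+1})\geq \pi/2$, we have $MD(e_i,v_{i+2}) \geq 2\,MinRad(K)$. Similarly, $MD(e_i,v_{i-1}) \geq \min\{2\,MinRad(K),\,MinEdge(K)\}$, and when $angle(v_{i})\geq \pi/2$, $MD(e_i,v_{i-1}) \geq 2\,MinRad(K)$.
   Context: A polygonal knot $K$ with $n$ edges is given by distinct vertices $v_1,\dots,v_n\in\mathbb{R}^3$ (indices taken mod $n$), with edges $e_i$ the straight segment from $v_i$ to $v_{i+1}$, such that edges meet only at the common vertex of adjacent edges. $|e_i|$ denotes the length of $e_i$; $MinEdge(K)=\min_i|e_i|$. $angle(v_i)\in[0,\pi)$ is the turning angle at $v_i$, i.e. the angle between the vectors $v_i-v_{i-1}$ and $v_{i+1}-v_i$. Define $Rad(v_i)=\dfrac{\min\{|e_{i-1}|,|e_i|\}}{2\tan(angle(v_i)/2)}$ (equal to $+\infty$ if $angle(v_i)=0$) and $MinRad(K)=\min_i Rad(v_i)$. For an edge $e$ and vertex $v$, $MD(e,v)$ denotes the minimum Euclidean distance between the edge $e$ and the point $v$. *)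

From Stdlib Require Import Reals List.
From Coquelicot Require Import Coquelicot.
Open Scope R_scope.

Record pt := Pt { px : R; py : R; pz : R }.
Definition padd (a b : pt) := Pt (px a + px b) (py a + py b) (pz a + pz b).
Definition psub (a b : pt) := Pt (px a - px b) (py a - py b) (pz a - pz b).
Definition pscal (t : R) (a : pt) := Pt (t * px a) (t * py a) (t * pz a).
Definition dot (a b : pt) := px a * px b + py a * py b + pz a * pz b.
Definition norm (a : pt) := sqrt (dot a a).
Definition dist (a b : pt) := norm (psub a b).

Definition on_seg (a b p : pt) : Prop :=
  exists t, 0 <= t <= 1 /\ p = padd a (pscal t (psub b a)).

Definition vtx (n : nat) (v : nat -> pt) (i : nat) : pt := v (i mod n)%nat.

(* index i-1 mod n *)
Definition prev (n i : nat) : nat := (i + n - 1)%nat.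

Definition is_knot (n : nat) (v : nat -> pt) : Prop :=
  (3 <= n)%nat /\
  (forall i j, (i < n)%nat -> (j < n)%nat -> i <> j -> v i <> v j) /\
  (forall i j p, (i < n)%nat -> (j < n)%nat -> i <> j ->
     on_seg (vtx n v i) (vtx n v (S i)) p ->
     on_seg (vtx n v j) (vtx n v (S j)) p ->
     (j = (S i mod n)%nat /\ p = vtx n v j) \/
     (i = (S j mod n)%nat /\ p = vtx n v i)).

Definition edge_len (n : nat) (v : nat -> pt) (i : nat) : R :=
  dist (vtx n v (S i)) (vtx n v i).

Definition MinEdge (n : nat) (v : nat -> pt) : R :=
  fold_right Rmin (edge_len n v 0) (map (edge_len n v) (seq 0 n)).

(* turning angle at v_i: angle between v_i - v_(i-1) and v_(i+1) - v_i *)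
Definition angle (n : nat) (v : nat -> pt) (i : nat) : R :=
  let u := psub (vtx n v i) (vtx n v (prev n i)) in
  let w := psub (vtx n v (S i)) (vtx n v i) in
  acos (dot u w / (norm u * norm w)).

Definition Rad (n : nat) (v : nat -> pt) (i : nat) : Rbar :=
  if Req_EM_T (angle n v i) 0 then p_infty
  else Finite (Rmin (edge_len n v (prev n i)) (edge_len n v i)
               / (2 * tan (angle n v i / 2))).

Definition MinRad (n : nat) (v : nat -> pt) : Rbar :=
  fold_right Rbar_min p_infty (map (Rad n v) (seq 0 n)).

Definition MD (a b x : pt) : R :=
  real (Glb_Rbar (fun d => exists p, on_seg a b p /\ d = dist p x)).

Definition MinBound (n : nat) (v : nat -> pt) : Rbar :=
  Rbar_min (Rbar_mult 2 (MinRad n v)) (Finite (MinEdge n v)).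

(* At the far end b of the edge [a,b], with next vertex c = b + w and turning angle θ, every
   point of the edge is c - (s (b - a) + w) for some s >= 0, and
   |s (b - a) + w|^2 = (s |b - a| + |w| cos θ)^2 + (|w| sin θ)^2.
   Hence MD(e, c) >= |w| sin θ always, and MD(e, c) >= |w| >= MinEdge when θ <= π/2.
   When θ >= π/2, 2 Rad(b) = m cot(θ/2) with m <= |w|, and cot(θ/2) <= 2 sin(θ/2)^2 cot(θ/2)
   = sin θ because sin(θ/2)^2 >= 1/2, so 2 MinRad <= |w| sin θ <= MD(e, c).
   The bound for the previous vertex is the same statement for the reversed edge. *)

From Pilot Require Import Defs.
From Stdlib Require Import Reals List Lia Lra Psatz.
From Coquelicot Require Import Coquelicot.
(* Coquelicot also defines [norm]; make Defs' [norm] win. *)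
Import Defs.
Open Scope R_scope.

Definition vangle (u w : pt) : R := acos (dot u w / (norm u * norm w)).

Lemma dot_self_ge0 u : 0 <= dot u u.
Proof. destruct u; unfold dot; simpl; nra. Qed.

Lemma norm_ge0 u : 0 <= norm u.
Proof. apply sqrt_pos. Qed.

Lemma Rsqr_norm u : (norm u)² = dot u u.
Proof. apply Rsqr_sqrt, dot_self_ge0. Qed.

Lemma le_norm_of_Rsqr y u : y² <= dot u u -> y <= norm u.
Proof. intro H. apply Rsqr_incr_0_var; [rewrite Rsqr_norm; exact H | apply norm_ge0]. Qed.

Lemma norm_psub_sym a b : norm (psub a b) = norm (psub b a).
Proof. unfold norm; f_equal; destruct a, b; unfold dot, psub; simpl; ring. Qed.

Lemma dot_Cauchy_Schwarz u w : (dot u w)² <= dot u u * dot w w.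
Proof.
  destruct u as [a b c], w as [d e f]; unfold dot, Rsqr; simpl.
  (* Lagrange's identity *)
  assert (E : (a*a+b*b+c*c)*(d*d+e*e+f*f) - (a*d+b*e+c*f)*(a*d+b*e+c*f)
            = (b*f-c*e)² + (c*d-a*f)² + (a*e-b*d)²) by (unfold Rsqr; ring).
  pose proof (Rle_0_sqr (b*f-c*e)); pose proof (Rle_0_sqr (c*d-a*f));
    pose proof (Rle_0_sqr (a*e-b*d)).
  lra.
Qed.

Lemma Rabs_dot_le u w : Rabs (dot u w) <= norm u * norm w.
Proof.
  rewrite <- (Rabs_pos_eq (norm u * norm w)) by (apply Rmult_le_pos; apply norm_ge0).
  apply Rsqr_le_abs_0. rewrite Rsqr_mult, !Rsqr_norm. apply dot_Cauchy_Schwarz.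
Qed.

Lemma vangle_bound u w : 0 <= vangle u w <= PI.
Proof. apply acos_bound. Qed.

Lemma dot_eq_cos_vangle u w : dot u w = norm u * norm w * cos (vangle u w).
Proof.
  pose proof (Rabs_dot_le u w) as H.
  pose proof (norm_ge0 u) as Hu; pose proof (norm_ge0 w) as Hw.
  destruct (Req_dec (norm u * norm w) 0) as [Z|Z].
  - rewrite Z in *. rewrite Rmult_0_l. pose proof (Rabs_pos (dot u w)).
    apply Rabs_eq_0. lra.
  - assert (P : 0 < norm u * norm w) by (pose proof (Rmult_le_pos _ _ Hu Hw); lra).
    apply Rabs_le_between in H.
    unfold vangle. rewrite cos_acos.
    + unfold Rdiv. rewrite (Rmult_comm (dot u w)), <- Rmult_assoc, Rinv_r, Rmult_1_l by exact Z.
      reflexivity.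
    + split; [apply (Rle_div_r _ _ _ P) | apply (Rle_div_l _ _ _ P)]; lra.
Qed.

Lemma vangle_psub_swap a b z : vangle (psub a b) (psub z a) = vangle (psub a z) (psub b a).
Proof.
  unfold vangle.
  replace (dot (psub a b) (psub z a)) with (dot (psub a z) (psub b a))
    by (destruct a, b, z; unfold dot, psub; simpl; ring).
  rewrite (norm_psub_sym a b), (norm_psub_sym z a), (Rmult_comm (norm (psub b a))).
  reflexivity.
Qed.

Lemma norm_ray_ge u w s : 0 <= s ->
  norm w * sin (vangle u w) <= norm (padd (pscal s u) w) /\
  (vangle u w <= PI / 2 -> norm w <= norm (padd (pscal s u) w)).
Proof.
  intro Hs.
  pose proof (vangle_bound u w) as Hb.
  set (th := vangle u w) in *.
  assert (E : dot (padd (pscal s u) w) (padd (pscal s u) w)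
              = (s * norm u)² + 2 * s * (norm u * norm w * cos th) + (norm w)²).
  { rewrite !Rsqr_mult, !Rsqr_norm, <- dot_eq_cos_vangle.
    destruct u, w; unfold dot, padd, pscal, Rsqr; simpl; ring. }
  pose proof (norm_ge0 u); pose proof (norm_ge0 w).
  split; intros; apply le_norm_of_Rsqr; rewrite E.
  - pose proof (sin2_cos2 th).
    pose proof (Rle_0_sqr (s * norm u + norm w * cos th)).
    unfold Rsqr in *. nra.
  - assert (0 <= cos th) by (apply cos_ge_0; lra).
    assert (0 <= s * (norm u * norm w * cos th))
      by (apply Rmult_le_pos; [lra | repeat apply Rmult_le_pos; lra]).
    pose proof (Rle_0_sqr (s * norm u)). lra.
Qed.

Lemma on_seg_sym a b p : on_seg a b p -> on_seg b a p.
Proof.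
  intros [t [Ht ->]]. exists (1 - t). split; [lra|].
  destruct a, b; unfold padd, pscal, psub; simpl; f_equal; ring.
Qed.

Lemma dist_on_seg a b c p : on_seg a b p ->
  exists s, 0 <= s /\ dist p c = norm (padd (pscal s (psub b a)) (psub c b)).
Proof.
  intros [t [Ht ->]]. exists (1 - t). split; [lra|].
  unfold dist. rewrite norm_psub_sym. f_equal.
  destruct a, b, c; unfold padd, pscal, psub; simpl; f_equal; ring.
Qed.

Lemma MD_ge a b x B : (forall p, on_seg a b p -> B <= dist p x) -> B <= MD a b x.
Proof.
  intro H. unfold MD.
  set (E := fun d => exists p, on_seg a b p /\ d = dist p x).
  destruct (Glb_Rbar_correct E) as [Hlb Hglb].
  assert (HB : Rbar_le B (Glb_Rbar E)).
  { apply Hglb. intros d [p [Hp ->]]. apply H, Hp. }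
  (* [real] would turn an infinite glb into 0; it is finite because a is on the segment *)
  assert (Ha : Rbar_le (Glb_Rbar E) (dist a x)).
  { apply Hlb. exists a. split; [|reflexivity]. exists 0. split; [lra|].
    destruct a, b; unfold padd, pscal, psub; simpl; f_equal; ring. }
  destruct (Glb_Rbar E); simpl in *; tauto.
Qed.

Lemma MD_sym a b x : MD a b x = MD b a x.
Proof.
  unfold MD. f_equal. apply Glb_Rbar_eqset.
  intro d. split; intros [p [Hp ->]]; exists p; split; auto; apply on_seg_sym, Hp.
Qed.

Lemma MD_next_ge a b c :
  norm (psub c b) * sin (vangle (psub b a) (psub c b)) <= MD a b c /\
  (vangle (psub b a) (psub c b) <= PI / 2 -> norm (psub c b) <= MD a b c).
Proof.
  split; [|intro Hth]; apply MD_ge; intros p Hp;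
    destruct (dist_on_seg a b c p Hp) as [s [Hs ->]];
    destruct (norm_ray_ge (psub b a) (psub c b) s Hs); auto.
Qed.

Lemma vtx_congr n v j k : (j mod n = k mod n)%nat -> vtx n v j = vtx n v k.
Proof. intro H. unfold vtx. rewrite H. reflexivity. Qed.

Lemma vtx_add_n n v j : vtx n v (j + n) = vtx n v j.
Proof.
  apply vtx_congr.
  rewrite Nat.Div0.add_mod, Nat.Div0.mod_same, Nat.add_0_r. apply Nat.Div0.mod_mod.
Qed.

Lemma vtx_prev_S n v i : vtx n v (prev n (S i)) = vtx n v i.
Proof. unfold prev. replace (S i + n - 1)%nat with (i + n)%nat by lia. apply vtx_add_n. Qed.

Lemma vtx_S_prev n v i : (n <> 0)%nat -> vtx n v (S (prev n i)) = vtx n v i.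
Proof. intro Hn. unfold prev. replace (S (i + n - 1)) with (i + n)%nat by lia. apply vtx_add_n. Qed.

Lemma vtx_mod n v j : vtx n v (j mod n) = vtx n v j.
Proof. apply vtx_congr, Nat.Div0.mod_mod. Qed.

Lemma vtx_S_mod n v j : vtx n v (S (j mod n)) = vtx n v (S j).
Proof.
  apply vtx_congr. rewrite <- (Nat.add_1_r j), <- Nat.add_1_r.
  apply Nat.Div0.add_mod_idemp_l.
Qed.

Lemma vtx_prev_mod n v j : (n <> 0)%nat -> vtx n v (prev n (j mod n)) = vtx n v (prev n j).
Proof.
  intro Hn. unfold prev. apply vtx_congr.
  replace (j mod n + n - 1)%nat with (j mod n + (n - 1))%nat by lia.
  replace (j + n - 1)%nat with (j + (n - 1))%nat by lia.
  apply Nat.Div0.add_mod_idemp_l.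
Qed.

Lemma edge_len_mod n v j : edge_len n v (j mod n) = edge_len n v j.
Proof. unfold edge_len. rewrite vtx_mod, vtx_S_mod. reflexivity. Qed.

Lemma Rad_mod n v j : (n <> 0)%nat -> Rad n v (j mod n) = Rad n v j.
Proof.
  intro Hn. unfold Rad, angle, edge_len.
  rewrite !vtx_S_prev, vtx_mod, vtx_S_mod, vtx_prev_mod by exact Hn.
  reflexivity.
Qed.

Lemma fold_right_Rmin_le l d x : In x l -> fold_right Rmin d l <= x.
Proof.
  induction l as [|y l IH]; simpl; [tauto|].
  intros [->|H]; [apply Rmin_l | eapply Rle_trans; [apply Rmin_r | auto]].
Qed.

Lemma fold_right_Rbar_min_le l x : In x l -> Rbar_le (fold_right Rbar_min p_infty l) x.
Proof.
  induction l as [|y l IH]; simpl; [tauto|].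
  intros [->|H]; [apply Rbar_min_l | eapply Rbar_le_trans; [apply Rbar_min_r | auto]].
Qed.

Lemma In_seq_mod n j : (n <> 0)%nat -> In (j mod n) (seq 0 n).
Proof. intro Hn. apply in_seq. pose proof (Nat.mod_upper_bound j n Hn). lia. Qed.

Lemma MinEdge_le n v j : (n <> 0)%nat -> MinEdge n v <= edge_len n v j.
Proof.
  intro Hn. rewrite <- edge_len_mod.
  apply fold_right_Rmin_le, in_map, In_seq_mod, Hn.
Qed.

Lemma MinRad_le n v j : (n <> 0)%nat -> Rbar_le (MinRad n v) (Rad n v j).
Proof.
  intro Hn. rewrite <- (Rad_mod n v j Hn).
  apply fold_right_Rbar_min_le, in_map, In_seq_mod, Hn.
Qed.

Lemma Rbar_mult_2_le x r y : Rbar_le x (Finite r) -> 2 * r <= y ->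
  Rbar_le (Rbar_mult 2 x) (Finite y).
Proof.
  intros Hx Hy. destruct x as [x| |]; simpl in *; try tauto.
  - lra.
  - unfold Rbar_mult, Rbar_mult'.
    destruct (Rle_dec 0 2) as [H2|H2]; [destruct (Rle_lt_or_eq_dec 0 2 H2)|]; simpl; auto; lra.
Qed.

Lemma double_half_cot_le_sin th m L : PI / 2 <= th <= PI -> 0 <= m <= L ->
  2 * (m / (2 * tan (th / 2))) <= L * sin th.
Proof.
  intros Hth Hm.
  replace (sin th) with (sin (2 * (th / 2))) by (f_equal; field).
  assert (Hh : PI / 4 <= th / 2 <= PI / 2) by lra.
  set (h := th / 2) in *. clearbody h.
  rewrite sin_2a.
  assert (Hc : 0 <= cos h) by (apply cos_ge_0; lra).
  assert (Hs : 0 < sin h) by (apply sin_gt_0; pose proof PI_RGT_0; lra).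
  assert (Hs2 : 1 <= 2 * sin h * sin h).
  { assert (Hc2 : cos (2 * h) <= 0) by (apply cos_le_0; lra).
    rewrite cos_2a_sin in Hc2. lra. }
  unfold tan.
  destruct (Req_dec (cos h) 0) as [Z|Z].
  - (* th = PI: Rocq's tan (PI / 2) is 0 (division by 0), and both sides vanish *)
    rewrite Z. unfold Rdiv. rewrite Rinv_0, !Rmult_0_r, Rinv_0. lra.
  - replace (2 * (m / (2 * (sin h / cos h)))) with (m * cos h / sin h) by (field; lra).
    apply (Rle_div_l _ _ _ Hs).
    assert (HL : 0 <= L * cos h) by (apply Rmult_le_pos; lra).
    assert (m * cos h <= L * cos h) by (apply Rmult_le_compat_r; lra).
    assert (L * cos h * 1 <= L * cos h * (2 * sin h * sin h))
      by (apply Rmult_le_compat_l; lra).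
    lra.
Qed.

Lemma two_MinRad_le_sin n v j L : (n <> 0)%nat -> PI / 2 <= angle n v j ->
  Rmin (edge_len n v (prev n j)) (edge_len n v j) <= L ->
  Rbar_le (Rbar_mult 2 (MinRad n v)) (Finite (L * sin (angle n v j))).
Proof.
  intros Hn Ha Hm.
  assert (Hb : angle n v j <= PI) by apply acos_bound.
  assert (Hm0 : 0 <= Rmin (edge_len n v (prev n j)) (edge_len n v j))
    by (apply Rmin_glb; apply norm_ge0).
  pose proof (MinRad_le n v j Hn) as H. unfold Rad in H.
  destruct (Req_EM_T (angle n v j) 0) as [E|_]; [pose proof PI_RGT_0; lra|].
  apply (Rbar_mult_2_le _ _ _ H). apply double_half_cot_le_sin; lra.
Qed.

Lemma MinBound_le_at_vertex n v j L D : (n <> 0)%nat ->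
  (L = edge_len n v (prev n j) \/ L = edge_len n v j) ->
  L * sin (angle n v j) <= D -> (angle n v j <= PI / 2 -> L <= D) ->
  Rbar_le (MinBound n v) (Finite D) /\
  (PI / 2 <= angle n v j -> Rbar_le (Rbar_mult 2 (MinRad n v)) (Finite D)).
Proof.
  intros Hn HL Hsin Hcos.
  assert (HE : MinEdge n v <= L) by (destruct HL as [-> | ->]; apply MinEdge_le, Hn).
  assert (Hrad : PI / 2 <= angle n v j -> Rbar_le (Rbar_mult 2 (MinRad n v)) (Finite D)).
  { intro Ha. apply Rbar_le_trans with (Finite (L * sin (angle n v j))); [|exact Hsin].
    apply two_MinRad_le_sin; auto.
    destruct HL as [-> | ->]; [apply Rmin_l | apply Rmin_r]. }
  split; [|exact Hrad].
  unfold MinBound. destruct (Rle_lt_dec (angle n v j) (PI / 2)) as [Hac|Hob].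
  - apply Rbar_le_trans with (Finite (MinEdge n v)); [apply Rbar_min_r|].
    simpl. specialize (Hcos Hac). lra.
  - apply Rbar_le_trans with (Rbar_mult 2 (MinRad n v)); [apply Rbar_min_l|].
    apply Hrad. lra.
Qed.

Lemma MD_next_vertex_ge n v i :
  edge_len n v (S i) * sin (angle n v (S i))
    <= MD (vtx n v i) (vtx n v (S i)) (vtx n v (S (S i))) /\
  (angle n v (S i) <= PI / 2 ->
   edge_len n v (S i) <= MD (vtx n v i) (vtx n v (S i)) (vtx n v (S (S i)))).
Proof. unfold angle, edge_len, dist. rewrite vtx_prev_S. apply MD_next_ge. Qed.

Lemma MD_prev_vertex_ge n v i : (n <> 0)%nat ->
  edge_len n v (prev n i) * sin (angle n v i)
    <= MD (vtx n v i) (vtx n v (S i)) (vtx n v (prev n i)) /\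
  (angle n v i <= PI / 2 ->
   edge_len n v (prev n i) <= MD (vtx n v i) (vtx n v (S i)) (vtx n v (prev n i))).
Proof.
  intro Hn. rewrite MD_sym.
  replace (edge_len n v (prev n i)) with (norm (psub (vtx n v (prev n i)) (vtx n v i)))
    by (unfold edge_len, dist; rewrite vtx_S_prev, norm_psub_sym by exact Hn; reflexivity).
  replace (angle n v i)
    with (vangle (psub (vtx n v i) (vtx n v (S i))) (psub (vtx n v (prev n i)) (vtx n v i)))
    by (rewrite vangle_psub_swap; reflexivity).
  apply MD_next_ge.
Qed.

Theorem lemma3p3 (n : nat) (v : nat -> pt) (i : nat) :
  is_knot n v -> (i < n)%nat ->
  let MDnext := MD (vtx n v i) (vtx n v (S i)) (vtx n v (S (S i))) in
  let MDprev := MD (vtx n v i) (vtx n v (S i)) (vtx n v (prev n i)) in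
  Rbar_le (MinBound n v) (Finite MDnext) /\
  (PI / 2 <= angle n v (S i) ->
     Rbar_le (Rbar_mult 2 (MinRad n v)) (Finite MDnext)) /\
  Rbar_le (MinBound n v) (Finite MDprev) /\
  (PI / 2 <= angle n v i ->
     Rbar_le (Rbar_mult 2 (MinRad n v)) (Finite MDprev)).
Proof.
  intros _ Hi MDnext MDprev.
  assert (Hn : (n <> 0)%nat) by lia.
  destruct (MD_next_vertex_ge n v i) as [Hsin Hcos].
  destruct (MinBound_le_at_vertex n v (S i) _ _ Hn (or_intror eq_refl) Hsin Hcos)
    as [Hnext Hnext_obtuse].
  destruct (MD_prev_vertex_ge n v i Hn) as [Hsin' Hcos'].
  destruct (MinBound_le_at_vertex n v i _ _ Hn (or_introl eq_refl) Hsin' Hcos')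
    as [Hprev Hprev_obtuse].
  auto.
Qed.
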